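(* Let $I$ be a set. Let $T_1,T_2$ be nonempty $I$-colored binary plane trees and let $v$ be a vertex of $T_1$. Then the multiset $\mathsf{IF}(\nabla_v(T_1,T_2))$ of insertion factors of the insertion $\nabla_v(T_1,T_2)$ is the multiset union of $\mathsf{IF}(T_1)$ and $\mathsf{IF}(T_2)$.
   Context: A binary plane tree is a rooted tree in which each child of a vertex is designated as a left child or a right child, and no vertex has more than one left child or more than one right child; trees are considered up to isomorphism, and the empty tree $\varnothing$ is allowed. The left (right) subtree of a vertex is the subtree rooted at its left (right) child. A branch is a nonempty binary plane tree in which every vertex has at most one child. Let $\boxminus$ be a special symbol not a vertex of any tree. An $I$-coloring of a binary plane tree $T$ is a function $\chi\colon T\sqcup\{\boxminus\}\to I$ (here $T$ also denotes its vertex set); an $I$-colored binary plane tree is a binary plane tree together with an $I$-coloring. Insertion: for nonempty $I$-colored trees $T_1,T_2$ with colorings $\chi_1,\chi_2$ and a vertex $v$ of $T_1$, the tree $\nabla_v(T_1,T_2)$ is formed as follows: replace $v$ by a left edge, i.e. create a new vertex $v^*$ that takes the place of $v$ in $T_1$ (attached to $v$'s former parent on the same side), and make $v$ (with its subtrees) the left child of $v^*$; then attach $T_2$ as the right subtree of $v^*$. Its coloring $\chi$ satisfies $\chi(u)=\chi_1(u)$ for $u\in T_1\sqcup\{\boxminus\}$, $\chi(u')=\chi_2(u')$ for $u'\in T_2$, and $\chi(v^* )=\chi_2(\boxminus)$. Insertion factors: for a nonempty $I$-colored tree $T$, let $\Lambda_T$ consist of $\boxminus$ together with the vertices of $T$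 having two children. Define $\gamma\colon T\cup\{\boxminus\}\to\Lambda_T$ by: $\gamma(u)=u$ if $u\in\Lambda_T$; otherwise, if some vertex $w\in\Lambda_T\setminus\{\boxminus\}$ has $u$ in its right subtree, $\gamma(u)$ is the lowest (deepest) such $w$; otherwise $\gamma(u)=\boxminus$. For $v\in\Lambda_T$, the tree $T_v$ has vertex set $\gamma^{-1}(v)\setminus\{v\}$, where for $u,w$ in this set, $w$ is a left (resp. right) child of $u$ in $T_v$ iff $w$ lies in the left (resp. right) subtree of $u$ in $T$ and no element of $\gamma^{-1}(v)$ lies strictly between $u$ and $w$ on the path in $T$; each such vertex keeps its color from $T$, and $\boxminus$ in $T_v$ is given the color of $v$ in $T$ (the color of $\boxminus$ in $T$ if $v=\boxminus$). Each $T_v$ is an $I$-colored branch, and the multiset of the $T_v$ ($v\in\Lambda_T$), taken up to isomorphism of $I$-colored trees, is denoted $\mathsf{IF}(T)$. *)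

From Stdlib Require Import Permutation.
From mathcomp Require Import all_boot.

Set Implicit Arguments.
Unset Strict Implicit.
Unset Printing Implicit Defensive.

(* Binary plane trees with vertices colored in I, up to isomorphism:
   BLeaf is the empty tree, BNode c l r a root of color c with left
   subtree l and right subtree r (an empty subtree = no child). *)
Inductive btree (I : Type) : Type :=
  | BLeaf : btree I
  | BNode : I -> btree I -> btree I -> btree I.
Arguments BLeaf {I}.

(* An I-colored binary plane tree: the underlying tree together with
   the color of the special symbol ⊟ (the second component). *)
Definition ctree (I : Type) : Type := (btree I * I)%type.

Section Trees.
Variable I : Type.
Implicit Types (t : btree I) (p u w x : seq bool).

(* Vertices are addressed by their path from the root:
   false = go to the left child, true = go to the right child. *)
Fixpoint sub_at t p : option (btree I) :=
  match t with
  | BLeaf => None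
  | BNode _ l r =>
      match p with
      | [::] => Some t
      | b :: p' => sub_at (if b then r else l) p'
      end
  end.

Definition is_vertex t p : bool := if sub_at t p is Some _ then true else false.

Definition color_at (d : I) t p : I :=
  if sub_at t p is Some (BNode c _ _) then c else d.

Fixpoint vertices t : seq (seq bool) :=
  match t with
  | BLeaf => [::]
  | BNode _ l r => [::] :: (map (cons false) (vertices l) ++ map (cons true) (vertices r))
  end.

Definition has_two_children t p : bool :=
  if sub_at t p is Some (BNode _ (BNode _ _ _) (BNode _ _ _)) then true else false.

Definition in_right_subtree w u : bool := prefix (rcons w true) u.
Definition in_left_subtree w u : bool := prefix (rcons w false) u.
Definition strictly_between u w x : bool :=
  [&& prefix u x, prefix x w, x != u & x != w].

(* Elements of T ⊔ {⊟}: None is ⊟, Some p is the vertex at address p. *)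
Definition Lambda t : seq (option (seq bool)) :=
  None :: [seq Some p | p <- vertices t & has_two_children t p].

Definition gamma t (u : option (seq bool)) : option (seq bool) :=
  match u with
  | None => None
  | Some p =>
      if has_two_children t p then Some p else
      (* candidates w ∈ Λ_T \ {⊟} having p in their right subtree,
         listed by increasing depth (they are all ancestors of p) *)
      let cands := [seq w <- [seq take k p | k <- iota 0 (size p)]
                     | has_two_children t w && in_right_subtree w p] in
      if cands is [::] then None else Some (last [::] cands)
  end.

(* the tree T_v, for v ∈ Λ_T; dflt is a default color (never used). *)
Section Factor.
Variables (dflt : I) (t : btree I) (v : option (seq bool)).

Definition gamma_pre : seq (seq bool) :=
  [seq u <- vertices t | gamma t (Some u) == v].
(* vertex set of T_v: γ^{-1}(v) \ {v} *)
Definition fvert : seq (seq bool) :=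
  [seq u <- gamma_pre | Some u != v].

Definition no_between u w : bool := ~~ has (strictly_between u w) gamma_pre.
Definition lchild u w : bool := in_left_subtree u w && no_between u w.
Definition rchild u w : bool := in_right_subtree u w && no_between u w.

Fixpoint build (n : nat) u : btree I :=
  match n with
  | 0 => BLeaf
  | n'.+1 =>
      BNode (color_at dflt t u)
        (if [seq w <- fvert | lchild u w] is w :: _ then build n' w else BLeaf)
        (if [seq w <- fvert | rchild u w] is w :: _ then build n' w else BLeaf)
  end.

Definition froot : option (seq bool) :=
  if [seq u <- fvert | ~~ has (fun w => lchild w u || rchild w u) fvert] is r :: _
  then Some r else None.

Definition fshape : btree I :=
  if froot is Some r then build (size fvert) r else BLeaf.
End Factor.

Definition factor (T : ctree I) (v : option (seq bool)) : ctree I :=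
  (fshape T.2 T.1 v,
   if v is Some p then color_at T.2 T.1 p else T.2).

(* IF(T), the multiset of the T_v (v ∈ Λ_T), as a list up to permutation *)
Definition IF (T : ctree I) : seq (ctree I) :=
  [seq factor T v | v <- Lambda T.1].

(* insertion at address p: the subtree s at p is replaced by
   BNode c s t2, i.e. a new vertex v* of color c, left child v, right
   subtree t2 *)
Fixpoint ins_at t p (c : I) (t2 : btree I) : btree I :=
  match p with
  | [::] => BNode c t t2
  | b :: p' =>
      match t with
      | BLeaf => BLeaf
      | BNode a l r =>
          if b then BNode a l (ins_at r p' c t2) else BNode a (ins_at l p' c t2) r
      end
  end.

Definition insertion (T1 T2 : ctree I) (v : seq bool) : ctree I :=
  (ins_at T1.1 v T2.2 T2.1, T1.2).

End Trees.

From Pilot Require Import Defs.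
From Stdlib Require Import Permutation.
From mathcomp Require Import all_boot.

(* Address the vertices of the insertion through those of T1 and T2: a vertex
   of T1 keeps its address unless it lies below v, where an extra left step is
   inserted; v* takes the address v and T2 hangs below it on the right.  These
   embeddings preserve the ancestor relation and having two children, and v*
   has two children, so gamma commutes with them: it is unchanged on T1, whose
   vertices lie in the left subtree of v*, and sends ⊟ of T2 to v*.  Hence each
   factor of T1 and of T2 reappears unchanged, v* having the color of ⊟ in T2,
   and Λ of the insertion is the disjoint union of the images of Λ_T1, Λ_T2. *)

Set Implicit Arguments.
Unset Strict Implicit.
Unset Printing Implicit Defensive.

Section ProperPrefixes.
Variable T : Type.
Implicit Types s u : seq T.

Fixpoint proper_prefixes s : seq (seq T) :=
  if s is x :: s' then [::] :: map (cons x) (proper_prefixes s') else [::].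

Lemma proper_prefixesE s : proper_prefixes s = [seq take k s | k <- iota 0 (size s)].
Proof.
elim: s => [|x s IH] //=; rewrite IH -[1]/(1 + 0) iotaDl -!map_comp.
by congr (_ :: _); apply: eq_map.
Qed.

Lemma proper_prefixes_cat s u :
  proper_prefixes (s ++ u) = proper_prefixes s ++ map (cat s) (proper_prefixes u).
Proof.
elim: s => [|x s IH] /=; first by rewrite map_id.
by rewrite IH map_cat -!map_comp.
Qed.

End ProperPrefixes.

Definition olast (T : Type) (s : seq T) : option T :=
  if s is x :: s' then Some (last x s') else None.

Lemma olast_map (T U : Type) (f : T -> U) s : olast (map f s) = omap f (olast s).
Proof. by case: s => //= x s; rewrite last_map. Qed.

Lemma olast_cat_cons (T : Type) (s1 s2 : seq T) x : olast (s1 ++ x :: s2) = Some (last x s2).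
Proof. by case: s1 => //= y s1; rewrite last_cat. Qed.

Lemma perm_move (T : eqType) (x : T) a s g b :
  perm_eq (a ++ x :: s ++ g ++ b) (a ++ s ++ b ++ x :: g).
Proof. by rewrite perm_cat2l -[x :: _]cat1s perm_catCA perm_cat2l catA perm_catC. Qed.

Lemma perm_map_Permutation (T : eqType) (U : Type) (f : T -> U) (s t : seq T) :
  perm_eq s t -> Permutation (map f s) (map f t).
Proof.
have cat_app (l1 l2 : seq U) : l1 ++ l2 = List.app l1 l2 by elim: l1 => //= y l1 ->.
elim: s t => [|x s IH] t; first by rewrite perm_sym => /perm_nilP ->.
move=> xs_t; have /splitPr xt : x \in t by rewrite -(perm_mem xs_t) mem_head.
move: xs_t; case: t / xt => t1 t2.
rewrite perm_sym -[x :: t2]cat1s perm_catCA perm_cons perm_sym => /IH.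
by rewrite !map_cat /= !cat_app; apply: Permutation_cons_app.
Qed.

Section Addresses.
Implicit Types (v p q : seq bool).

(* The address in the insertion of the vertex of T1 at address p. *)
Fixpoint shift_addr v p : seq bool :=
  match v, p with
  | [::], p => false :: p
  | x :: v', y :: p' => if x == y then y :: shift_addr v' p' else p
  | _ :: _, [::] => [::]
  end.

Definition graft_addr v q : seq bool := v ++ true :: q.

Lemma prefix_shift v p q : prefix (shift_addr v p) (shift_addr v q) = prefix p q.
Proof.
elim: v p q => [|x v IH] [|y p] [|z q] //=; rewrite ?eqxx //.
all: by (try case: y); (try case: z); case: x => //=; rewrite ?IH.
Qed.

Lemma prefix_rcons_shift v p q b :
  prefix (rcons (shift_addr v p) b) (shift_addr v q) = prefix (rcons p b) q.
Proof.
elim: v p q b => [|x v IH] [|y p] [|z q] b //=; rewrite ?eqxx //.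
all: by (try case: y); (try case: z); case: x; case: b => //=; rewrite ?IH ?prefix0s.
Qed.

Lemma shift_addr_inj v : injective (shift_addr v).
Proof.
elim: v => [|x v IH] [|y p] [|z q] //=; first by case=> -> ->.
all: (try case: y); (try case: z); case: x => //=.
all: by case=> /IH ->.
Qed.

Lemma shift_addr_cat v q : shift_addr v (v ++ q) = v ++ false :: q.
Proof. by elim: v => [|x v IH] //=; rewrite eqxx IH. Qed.

Lemma shift_addr_neq v p : shift_addr v p != v.
Proof.
elim: v p => [|x v IH] [|y p] //=.
by case: (x =P y) => [->|/nesym/eqP yx]; rewrite eqseq_cons ?eqxx ?IH ?(negbTE yx).
Qed.

Lemma shift_neq_graft v p q : shift_addr v p != graft_addr v q.
Proof.
rewrite /graft_addr; elim: v p => [|x v IH] [|y p] //=.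
by case: (x =P y) => [->|/nesym/eqP yx]; rewrite eqseq_cons ?eqxx ?IH ?(negbTE yx).
Qed.

Lemma graft_addr_inj v : injective (graft_addr v).
Proof. by move=> p q; rewrite /graft_addr; elim: v => [|x v IH] /=; [case | case=> /IH]. Qed.

Lemma prefix_graft v p q : prefix (graft_addr v p) (graft_addr v q) = prefix p q.
Proof. by rewrite /graft_addr prefix_catr // eqxx. Qed.

Lemma rcons_graft v q b : rcons (graft_addr v q) b = graft_addr v (rcons q b).
Proof. by rewrite /graft_addr rcons_cat. Qed.

Lemma prefix_graft_addr v q : prefix (graft_addr v q) v = false.
Proof. by apply/negP => /size_prefix; rewrite size_cat addnS ltnNge leq_addr. Qed.

Lemma graft_addr_neq v q : graft_addr v q != v.
Proof. by apply: contraFneq (prefix_graft_addr v q) => ->; apply: prefix_refl. Qed.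

Lemma proper_prefixes_shift v p :
  filter (predC1 v) (proper_prefixes (shift_addr v p)) = map (shift_addr v) (proper_prefixes p).
Proof.
elim: v p => [|x v IH] [|y p] //=.
  by rewrite filter_map (@eq_filter _ _ predT) ?filter_predT.
case: (x =P y) => [<-|/eqP xy] /=; rewrite filter_map -map_comp.
  have eq_v : preim (cons x) (predC1 (x :: v)) =1 predC1 v.
    by move=> w /=; rewrite eqseq_cons eqxx.
  by rewrite (eq_filter eq_v) IH -map_comp; congr (_ :: _); apply: eq_map => w /=; rewrite eqxx.
rewrite (@eq_filter _ _ predT) ?filter_predT => [|w /=]; last first.
  by rewrite eqseq_cons eq_sym (negbTE xy).
by congr (_ :: _); apply: eq_map => w /=; rewrite (negbTE xy).
Qed.

Lemma in_right_subtree_shift v p : in_right_subtree v (shift_addr v p) = false.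
Proof.
rewrite /in_right_subtree; elim: v p => [|x v IH] [|y p] //=.
by case: (x =P y) => [->|/eqP/negbTE xy] /=; rewrite ?IH ?xy ?andbF.
Qed.

Lemma proper_prefixes_graft v q :
  proper_prefixes (graft_addr v q) =
    proper_prefixes v ++ v :: map (graft_addr v) (proper_prefixes q).
Proof. by rewrite proper_prefixes_cat /= cats0 -map_comp. Qed.

(* ⊟ of T2 is sent to the new vertex v*. *)
Definition graft_opt v (o : option (seq bool)) : option (seq bool) :=
  if o is Some w then Some (graft_addr v w) else Some v.

Lemma graft_opt_inj v : injective (graft_opt v).
Proof.
move=> [p|] [q|] //= [].
- by move/graft_addr_inj ->.
- by move/eqP; rewrite (negbTE (graft_addr_neq v p)).
- by move/esym/eqP; rewrite (negbTE (graft_addr_neq v q)).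
Qed.

Lemma graft_opt_neq_shift v o o' : graft_opt v o != omap (shift_addr v) o'.
Proof.
case: o o' => [q|] [p|] //=; rewrite eq_sym.
  by apply: contraNneq (shift_neq_graft v p q) => [[->]].
by apply: contraNneq (shift_addr_neq v p) => [[->]].
Qed.

End Addresses.

Section Labels.
Variable I : Type.
Implicit Types (t : btree I) (p : seq bool).

Definition label t p : option I :=
  if sub_at t p is Some (BNode c _ _) then Some c else None.

Lemma label_leaf p : label BLeaf p = None.
Proof. by case: p. Qed.

Lemma label_cons c l r b p : label (BNode c l r) (b :: p) = label (if b then r else l) p.
Proof. by []. Qed.

Lemma is_vertexE t p : is_vertex t p = isSome (label t p).
Proof. by rewrite /is_vertex /label; elim: t p => [|c l IHl r IHr] [|[] p] //=. Qed.

Lemma color_atE d t p : color_at d t p = odflt d (label t p).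
Proof. by rewrite /color_at /label; case: (sub_at t p) => [[|]|]. Qed.

Lemma sub_at_cat t p q : sub_at t (p ++ q) = obind (fun s => sub_at s q) (sub_at t p).
Proof. by elim: t p => [|c l IHl r IHr] [|[] p] //=. Qed.

Lemma has_two_childrenE t p : has_two_children t p =
  isSome (label t (rcons p false)) && isSome (label t (rcons p true)).
Proof.
rewrite /has_two_children /label -!cats1 !sub_at_cat.
by case: (sub_at t p) => [[|c [|? ? ?] [|? ? ?]]|].
Qed.

Lemma label_root t p : isSome (label t p) -> isSome (label t [::]).
Proof. by case: t => [|c l r]; rewrite ?label_leaf. Qed.

Lemma label_vertices t p : p \in vertices t -> isSome (label t p).
Proof.
elim: t p => [|c l IHl r IHr] [|b p] //=.
by rewrite in_cons mem_cat /= => /orP[] /mapP[q vq [-> ->]]; [apply: IHl | apply: IHr].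
Qed.

End Labels.

Section InsertionLabels.
Variables (I : Type) (t2 : btree I) (c : I).
Implicit Types (t : btree I) (v p q : seq bool).

Lemma label_ins_root t v : isSome (label t v) -> isSome (label (ins_at t v c t2) [::]).
Proof. by case: t => [|a l r]; rewrite ?label_leaf //; case: v => [|[] v]. Qed.

Lemma label_ins_shift t v p :
  isSome (label t v) -> label (ins_at t v c t2) (shift_addr v p) = label t p.
Proof.
elim: v t p => [|x v IH] [|a l r] [|y p] //=; rewrite ?label_leaf //; first by case: x.
by rewrite label_cons; case: x y => [] [] /= vt; rewrite label_cons ?IH.
Qed.

Lemma label_ins_graft t v q :
  isSome (label t v) -> label (ins_at t v c t2) (graft_addr v q) = label t2 q.
Proof.
rewrite /graft_addr; elim: v t => [|x v IH] [|a l r] //=; rewrite ?label_leaf //.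
by rewrite label_cons; case: x => /= vt; rewrite label_cons IH.
Qed.

Lemma label_ins_at t v : isSome (label t v) -> label (ins_at t v c t2) v = Some c.
Proof.
elim: v t => [|x v IH] [|a l r] //=; rewrite ?label_leaf //.
by rewrite label_cons; case: x => /= vt; rewrite label_cons IH.
Qed.

Lemma label_ins_shift_rcons t v p b : isSome (label t v) ->
  isSome (label (ins_at t v c t2) (rcons (shift_addr v p) b)) = isSome (label t (rcons p b)).
Proof.
elim: v t p b => [|x v IH] [|a l r] [|y p] b //=; rewrite ?label_leaf // label_cons => vt.
  by case: x b vt => [] [] vt; rewrite !label_cons //= (label_ins_root vt) (label_root vt).
by case: x y vt => [] [] /= vt; rewrite ?label_cons ?IH.
Qed.

Lemma vertices_ins t v : isSome (label t v) ->
  exists A S B, vertices t = A ++ S ++ B /\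
    vertices (ins_at t v c t2) = map (shift_addr v) A ++ v ::
      map (shift_addr v) S ++ map (graft_addr v) (vertices t2) ++ map (shift_addr v) B.
Proof.
elim: v t => [|x v IH] [|a l r] //=; rewrite ?label_leaf //.
  by move=> _; exists [::], (vertices (BNode a l r)), [::]; rewrite /= !cats0.
rewrite label_cons => vt.
have shift_cons X :
    map (shift_addr (x :: v)) (map (cons x) X) = map (cons x) (map (shift_addr v) X).
  by rewrite -!map_comp; apply: eq_map => y /=; rewrite eqxx.
have shift_other b X : b != x -> map (shift_addr (x :: v)) (map (cons b) X) = map (cons b) X.
  by move=> bx; rewrite -map_comp; apply: eq_map => y /=; rewrite eq_sym (negbTE bx).
have graft_cons :
    map (graft_addr (x :: v)) (vertices t2) = map (cons x) (map (graft_addr v) (vertices t2)).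
  by rewrite -map_comp.
case: x vt shift_cons shift_other graft_cons => vt shift_cons shift_other graft_cons.
  have [A [S [B [-> ins_r]]]] := IH r vt.
  exists ([::] :: map (cons false) (vertices l) ++ map (cons true) A), (map (cons true) S),
    (map (cons true) B).
  split; first by rewrite /= !map_cat -!catA.
  rewrite [LHS]/= ins_r map_cons /= !map_cat (shift_other false) // -!catA graft_cons !shift_cons.
  by rewrite map_cons !map_cat.
have [A [S [B [-> ins_l]]]] := IH l vt.
exists ([::] :: map (cons false) A), (map (cons false) S),
  (map (cons false) B ++ map (cons true) (vertices r)).
split; first by rewrite /= !map_cat -!catA.
rewrite [LHS]/= ins_l map_cons /= !map_cat (shift_other true) // -!catA graft_cons !shift_cons.
by rewrite map_cons !map_cat /= -!catA.
Qed.

End InsertionLabels.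

(* Keep [/=] from unfolding [gamma] inside filter predicates; see [gammaE]. *)
Arguments gamma : simpl never.

Section RightAncestors.
Variable I : Type.
Implicit Types (t : btree I) (p : seq bool).

Definition right_ancestors t p : seq (seq bool) :=
  [seq w <- proper_prefixes p | has_two_children t w && in_right_subtree w p].

Lemma gammaE t p :
  gamma t (Some p) = if has_two_children t p then Some p else olast (right_ancestors t p).
Proof. by rewrite /gamma /right_ancestors proper_prefixesE; case: filter. Qed.

End RightAncestors.

Section FactorTransport.
Variables (I : Type) (d d' : I) (t t' : btree I) (o o' : option (seq bool)).
Variable f : seq bool -> seq bool.
Hypothesis fvert_f : fvert t' o' = map f (fvert t o).
Hypothesis lchild_f : {in fvert t o &, forall u w, lchild t' o' (f u) (f w) = lchild t o u w}.
Hypothesis rchild_f : {in fvert t o &, forall u w, rchild t' o' (f u) (f w) = rchild t o u w}.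
Hypothesis color_f : {in fvert t o, forall u, color_at d' t' (f u) = color_at d t u}.

Lemma build_transport n u : u \in fvert t o -> build d' t' o' n (f u) = build d t o n u.
Proof.
elim: n u => [|n IH] u ufv //=.
have child (R' R : rel (seq bool)) : {in fvert t o &, forall u w, R' (f u) (f w) = R u w} ->
    (if [seq w <- fvert t' o' | R' (f u) w] is w :: _ then build d' t' o' n w else BLeaf) =
    (if [seq w <- fvert t o | R u w] is w :: _ then build d t o n w else BLeaf).
  move=> R_f; rewrite fvert_f filter_map (eq_in_filter (a2 := R u)) => [|w wfv]; last first.
    exact: R_f.
  case E: [seq w <- fvert t o | R u w] => [|w ws] //=; apply: IH.
  by have := mem_head w ws; rewrite -E mem_filter => /andP[].
by rewrite color_f // (child _ _ lchild_f) (child _ _ rchild_f).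
Qed.

(* Qualified: [froot] alone is the orbit root of fingraph. *)
Lemma froot_transport : Defs.froot t' o' = omap f (Defs.froot t o).
Proof.
rewrite /Defs.froot fvert_f filter_map (eq_in_filter (a2 := fun u =>
  ~~ has (fun w => lchild t o w u || rchild t o w u) (fvert t o))) => [|u ufv].
  by case: filter.
by rewrite /= has_map; congr negb; apply: eq_in_has => w wfv /=; rewrite lchild_f ?rchild_f.
Qed.

Lemma froot_fvert r : Defs.froot t o = Some r -> r \in fvert t o.
Proof.
rewrite /Defs.froot; case E: filter => [|u us] // [<-].
by have := mem_head u us; rewrite -E mem_filter => /andP[].
Qed.

Lemma fshape_transport : fshape d' t' o' = fshape d t o.
Proof.
rewrite /fshape froot_transport fvert_f size_map.
by case E: (Defs.froot t o) => [r|] //=; rewrite build_transport // froot_fvert.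
Qed.

End FactorTransport.

Section Insertion.
Variables (I : Type) (t t2 : btree I) (c : I) (v : seq bool).
Hypotheses (vertex_v : isSome (label t v)) (t2_nonempty : t2 <> BLeaf).
Notation t' := (ins_at t v c t2).

Lemma has_two_children_shift p : has_two_children t' (shift_addr v p) = has_two_children t p.
Proof. by rewrite !has_two_childrenE !label_ins_shift_rcons. Qed.

Lemma has_two_children_graft q : has_two_children t' (graft_addr v q) = has_two_children t2 q.
Proof. by rewrite !has_two_childrenE !rcons_graft !label_ins_graft. Qed.

Lemma has_two_children_ins : has_two_children t' v.
Proof.
rewrite has_two_childrenE.
have <- : shift_addr v v = rcons v false by rewrite -cats1 -shift_addr_cat cats0.
have <- : graft_addr v [::] = rcons v true by rewrite /graft_addr cats1.
by rewrite label_ins_shift // label_ins_graft // vertex_v; case: (t2) t2_nonempty.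
Qed.

Lemma gamma_ins_at : gamma t' (Some v) = Some v.
Proof. by rewrite gammaE has_two_children_ins. Qed.

Lemma right_ancestors_shift p :
  right_ancestors t' (shift_addr v p) = map (shift_addr v) (right_ancestors t p).
Proof.
rewrite /right_ancestors; set P := fun w => _ && _.
transitivity [seq w <- filter (predC1 v) (proper_prefixes (shift_addr v p)) | P w].
  rewrite -filter_predI; apply: eq_filter => w /=; have [->|_] := eqVneq w v.
    by rewrite /P in_right_subtree_shift andbF.
  by rewrite andbT.
rewrite proper_prefixes_shift filter_map; congr map; apply: eq_filter => w /=.
by rewrite /P has_two_children_shift /in_right_subtree prefix_rcons_shift.
Qed.

Lemma gamma_shift p : gamma t' (Some (shift_addr v p)) = omap (shift_addr v) (gamma t (Some p)).
Proof.
rewrite !gammaE has_two_children_shift right_ancestors_shift olast_map.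
by case: has_two_children.
Qed.

Lemma right_ancestors_graft q : exists s,
  right_ancestors t' (graft_addr v q) = s ++ v :: map (graft_addr v) (right_ancestors t2 q).
Proof.
rewrite /right_ancestors proper_prefixes_graft filter_cat /= has_two_children_ins.
rewrite /in_right_subtree {2}/graft_addr -cats1 prefix_catr // eqxx /= prefix0s filter_map.
eexists; congr (_ ++ _ :: map _ _); apply: eq_filter => w /=.
by rewrite has_two_children_graft rcons_graft prefix_graft.
Qed.

Lemma gamma_graft q : gamma t' (Some (graft_addr v q)) = graft_opt v (gamma t2 (Some q)).
Proof.
rewrite !gammaE has_two_children_graft; case: has_two_children => //.
have [s ->] := right_ancestors_graft q; rewrite olast_cat_cons.
by case: right_ancestors => //= w s'; rewrite last_map.
Qed.

Lemma filter_vertices_ins_shift (P : pred (seq bool)) : ~~ P v ->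
    (forall q, ~~ P (graft_addr v q)) ->
  filter P (vertices t') = map (shift_addr v) (filter (preim (shift_addr v) P) (vertices t)).
Proof.
move=> Pv Pgraft; have [A [S [B [-> ->]]]] := vertices_ins t2 c vertex_v.
have graft0 : preim (graft_addr v) P =1 pred0 by move=> q; exact/negbTE/Pgraft.
rewrite filter_cat /= (negbTE Pv) !filter_cat !filter_map (eq_filter graft0).
by rewrite filter_pred0 !map_cat.
Qed.

Lemma filter_vertices_ins_graft (P : pred (seq bool)) : (forall p, ~~ P (shift_addr v p)) ->
  filter P (vertices t') =
    filter P [:: v] ++ map (graft_addr v) (filter (preim (graft_addr v) P) (vertices t2)).
Proof.
move=> Pshift; have [A [S [B [_ ->]]]] := vertices_ins t2 c vertex_v.
have shift0 : preim (shift_addr v) P =1 pred0 by move=> p; exact/negbTE/Pshift.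
rewrite -cat1s !filter_cat !filter_map !(eq_filter shift0) !filter_pred0.
by rewrite /= cats0.
Qed.

Lemma gamma_pre_shift o :
  gamma_pre t' (omap (shift_addr v) o) = map (shift_addr v) (gamma_pre t o).
Proof.
rewrite /gamma_pre filter_vertices_ins_shift /=.
- congr map; apply: eq_filter => p /=.
  by rewrite gamma_shift (inj_eq (inj_omap (@shift_addr_inj v))).
- by rewrite gamma_ins_at (graft_opt_neq_shift v None).
- by move=> q; rewrite gamma_graft graft_opt_neq_shift.
Qed.

Lemma gamma_pre_graft o : gamma_pre t' (graft_opt v o) =
  (if o is None then [:: v] else [::]) ++ map (graft_addr v) (gamma_pre t2 o).
Proof.
rewrite /gamma_pre filter_vertices_ins_graft => [|p]; last first.
  by rewrite gamma_shift eq_sym graft_opt_neq_shift.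
rewrite /= gamma_ins_at -[Some v]/(graft_opt v None) (inj_eq (@graft_opt_inj v)).
congr (_ ++ _); first by case: o.
by congr map; apply: eq_filter => q /=; rewrite gamma_graft (inj_eq (@graft_opt_inj v)).
Qed.

Lemma fvert_shift o : fvert t' (omap (shift_addr v) o) = map (shift_addr v) (fvert t o).
Proof.
rewrite /fvert gamma_pre_shift filter_map; congr map; apply: eq_filter => u /=.
by rewrite -[Some _]/(omap _ (Some u)) (inj_eq (inj_omap (@shift_addr_inj v))).
Qed.

Lemma fvert_graft o : fvert t' (graft_opt v o) = map (graft_addr v) (fvert t2 o).
Proof.
rewrite /fvert gamma_pre_graft filter_cat filter_map.
rewrite (_ : filter _ _ = [::]); last by case: o => //=; rewrite eqxx.
congr map; apply: eq_filter => u /=.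
by rewrite -[Some _]/(graft_opt v (Some u)) (inj_eq (@graft_opt_inj v)).
Qed.

Lemma no_between_shift o u w :
  no_between t' (omap (shift_addr v) o) (shift_addr v u) (shift_addr v w) = no_between t o u w.
Proof.
rewrite /no_between gamma_pre_shift has_map; congr negb; apply: eq_has => x /=.
by rewrite /strictly_between !prefix_shift !(inj_eq (@shift_addr_inj v)).
Qed.

Lemma no_between_graft o u w :
  no_between t' (graft_opt v o) (graft_addr v u) (graft_addr v w) = no_between t2 o u w.
Proof.
rewrite /no_between gamma_pre_graft has_cat has_map.
rewrite (_ : has _ _ = false); last by case: o => //=; rewrite /strictly_between prefix_graft_addr.
congr negb; apply: eq_has => x /=.
by rewrite /strictly_between !prefix_graft !(inj_eq (@graft_addr_inj v)).
Qed.

Lemma perm_Lambda_ins :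
  perm_eq (Lambda t') (map (omap (shift_addr v)) (Lambda t) ++ map (graft_opt v) (Lambda t2)).
Proof.
have [A [S [B [E1 E2]]]] := vertices_ins t2 c vertex_v.
rewrite /Lambda E1 E2 !filter_cat /= has_two_children_ins !filter_cat !filter_map.
rewrite !(eq_filter has_two_children_shift) (eq_filter has_two_children_graft) /=.
rewrite perm_cons !map_cat /= !map_cat -!catA -!map_comp.
exact: perm_move.
Qed.

Variable d : I.

Lemma factor_shift o : factor (t', d) (omap (shift_addr v) o) = factor (t, d) o.
Proof.
rewrite /factor /=; congr pair.
  apply: fshape_transport => [|u w _ _|u w _ _|u _]; first exact: fvert_shift.
  - by rewrite /lchild no_between_shift /in_left_subtree prefix_rcons_shift.
  - by rewrite /rchild no_between_shift /in_right_subtree prefix_rcons_shift.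
  - by rewrite !color_atE label_ins_shift.
by case: o => //= p; rewrite !color_atE label_ins_shift.
Qed.

Lemma factor_graft o : o \in Lambda t2 -> factor (t', d) (graft_opt v o) = factor (t2, c) o.
Proof.
have color_graft q : q \in vertices t2 -> color_at d t' (graft_addr v q) = color_at c t2 q.
  by move/label_vertices; rewrite !color_atE label_ins_graft //; case: label.
move=> o_Lambda; rewrite /factor /=; congr pair.
  apply: fshape_transport => [|u w _ _|u w _ _|u]; first exact: fvert_graft.
  - by rewrite /lchild no_between_graft /in_left_subtree rcons_graft prefix_graft.
  - by rewrite /rchild no_between_graft /in_right_subtree rcons_graft prefix_graft.
  - by rewrite /fvert /gamma_pre !mem_filter => /and3P[_ _]; apply: color_graft.
case: o o_Lambda => [q|_] /=; last by rewrite color_atE label_ins_at.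
by rewrite inE /= => /mapP[p]; rewrite mem_filter => /andP[_ ?] [->]; apply: color_graft.
Qed.

Lemma IF_ins : Permutation (IF (t', d)) (IF (t, d) ++ IF (t2, c)).
Proof.
have -> : IF (t, d) = map (factor (t', d)) (map (omap (shift_addr v)) (Lambda t)).
  by rewrite -map_comp; apply: eq_map => o /=; rewrite factor_shift.
have -> : IF (t2, c) = map (factor (t', d)) (map (graft_opt v) (Lambda t2)).
  by rewrite -map_comp; apply/eq_in_map => o /factor_graft /= ->.
by rewrite -map_cat; apply/perm_map_Permutation/perm_Lambda_ins.
Qed.

End Insertion.

Theorem proposition3p1 (I : Type) (T1 T2 : ctree I) (v : seq bool) :
  T1.1 <> BLeaf -> T2.1 <> BLeaf -> is_vertex T1.1 v ->
  Permutation (IF (insertion T1 T2 v)) (IF T1 ++ IF T2).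
Proof.
case: T1 T2 => [t d] [t2 c] _ t2_nonempty; rewrite is_vertexE => vertex_v.
exact: IF_ins.
Qed.
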